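(* There is a one-to-one correspondence between skeletal $2$-term homotopy Nijenhuis algebras and triples consisting of a Nijenhuis algebra $((A,\cdot),N)$, a Nijenhuis bimodule $((M,\triangleright,\triangleleft),N_M)$ over it, and a $3$-cocycle $(\chi,F)\in Z^3_{\mathrm{NAlg}}((A,N);(M,N_M))$. Explicitly, a skeletal $2$-term homotopy Nijenhuis algebra $((\mathcal{A}_1\xrightarrow{0}\mathcal{A}_0,\mu_2,\mu_3),(\mathcal{N}_0,\mathcal{N}_1,\mathcal{N}_2))$ corresponds to $A=\mathcal{A}_0$ with $a\cdot b=\mu_2(a,b)$, $N=\mathcal{N}_0$, $M=\mathcal{A}_1$ with $a\triangleright u=\mu_2(a,u)$, $u\triangleleft a=\mu_2(u,a)$, $N_M=\mathcal{N}_1$, and $(\chi,F)=(\mu_3,\mathcal{N}_2)$.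
   Context: Over a field of characteristic $0$. A 2-term $A_\infty$-algebra $(\mathcal{A}_1\xrightarrow{\partial}\mathcal{A}_0,\mu_2,\mu_3)$: linear $\partial$, bilinear $\mu_2:\mathcal{A}_i\times\mathcal{A}_j\to\mathcal{A}_{i+j}$ ($0\le i,j,i+j\le1$), trilinear $\mu_3:\mathcal{A}_0^{\times3}\to\mathcal{A}_1$, with, for $a,b,c,d\in\mathcal{A}_0$, $u,v\in\mathcal{A}_1$: $\partial\mu_2(a,u)=\mu_2(a,\partial u)$; $\partial\mu_2(u,a)=\mu_2(\partial u,a)$; $\mu_2(\partial u,v)=\mu_2(u,\partial v)$; $\partial\mu_3(a,b,c)=\mu_2(\mu_2(a,b),c)-\mu_2(a,\mu_2(b,c))$; $\mu_3(a,b,\partial u)=\mu_2(\mu_2(a,b),u)-\mu_2(a,\mu_2(b,u))$; $\mu_3(a,\partial u,b)=\mu_2(\mu_2(a,u),b)-\mu_2(a,\mu_2(u,b))$; $\mu_3(\partial u,a,b)=\mu_2(\mu_2(u,a),b)-\mu_2(u,\mu_2(a,b))$; $\mu_2(a,\mu_3(b,c,d))-\mu_3(\mu_2(a,b),c,d)+\mu_3(a,\mu_2(b,c),d)-\mu_3(a,b,\mu_2(c,d))+\mu_2(\mu_3(a,b,c),d)=0$. Write $ab=\mu_2(a,b)$ etc. A homotopy Nijenhuis operator is $(\mathcal{N}_0:\mathcal{A}_0\to\mathcal{A}_0,\mathcal{N}_1:\mathcal{A}_1\to\mathcal{A}_1,\mathcal{N}_2:\mathcal{A}_0\times\mathcal{A}_0\to\mathcal{A}_1)$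 with: $\partial\mathcal{N}_1=\mathcal{N}_0\partial$; $\mathcal{N}_0(\mathcal{N}_0(a)b+a\mathcal{N}_0(b)-\mathcal{N}_0(ab))-\mathcal{N}_0(a)\mathcal{N}_0(b)=\partial\mathcal{N}_2(a,b)$; $\mathcal{N}_1(\mathcal{N}_0(a)u+a\mathcal{N}_1(u)-\mathcal{N}_1(au))-\mathcal{N}_0(a)\mathcal{N}_1(u)=\mathcal{N}_2(a,\partial u)$; $\mathcal{N}_1(\mathcal{N}_1(u)a+u\mathcal{N}_0(a)-\mathcal{N}_1(ua))-\mathcal{N}_1(u)\mathcal{N}_0(a)=\mathcal{N}_2(\partial u,a)$; and, writing $a\cdot_{\mathcal{N}}b=\mathcal{N}_0(a)b+a\mathcal{N}_0(b)-\mathcal{N}_0(ab)$: $\mathcal{N}_0(a)\mathcal{N}_2(b,c)-\mathcal{N}_2(a,b)\mathcal{N}_0(c)-\mathcal{N}_2(a\cdot_{\mathcal{N}}b,c)+\mathcal{N}_2(a,b\cdot_{\mathcal{N}}c)-\mathcal{N}_1\big(a\mathcal{N}_2(b,c)-\mathcal{N}_2(ab,c)+\mathcal{N}_2(a,bc)-\mathcal{N}_2(a,b)c\big)=\mu_3(\mathcal{N}_0a,\mathcal{N}_0b,\mathcal{N}_0c)-\mathcal{N}_1\mu_3(\mathcal{N}_0a,\mathcal{N}_0b,c)-\mathcal{N}_1\mu_3(\mathcal{N}_0a,b,\mathcal{N}_0c)-\mathcal{N}_1\mu_3(a,\mathcal{N}_0b,\mathcal{N}_0c)+\mathcal{N}_1^2\mu_3(\mathcal{N}_0a,b,c)+\mathcal{N}_1^2\mu_3(a,\mathcal{N}_0b,c)+\mathcal{N}_1^2\mu_3(a,b,\mathcal{N}_0c)-\mathcal{N}_1^3\mu_3(a,b,c)$.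 A 2-term homotopy Nijenhuis algebra is such a pair; skeletal means $\partial=0$. Nijenhuis algebra: associative $(A,\cdot)$ with linear $N$, $N(a)N(b)=N(N(a)b+aN(b)-N(ab))$. Nijenhuis bimodule: $A$-bimodule with $N_M$ satisfying $N(a)\triangleright N_M(u)=N_M(N(a)\triangleright u+a\triangleright N_M(u)-N_M(a\triangleright u))$, $N_M(u)\triangleleft N(a)=N_M(N_M(u)\triangleleft a+u\triangleleft N(a)-N_M(u\triangleleft a))$. $C^3_{\mathrm{NAlg}}=\mathrm{Hom}(A^{\otimes3},M)\oplus\mathrm{Hom}(A^{\otimes2},M)$ and $(\chi,F)$ is a 3-cocycle iff $\delta_{\mathrm{Hoch}}\chi=0$ and $d_{N,N_M}F-\partial^{N,N_M}\chi=0$, where $(\delta_{\mathrm{Hoch}}f)(a_1,\dots,a_{n+1})=a_1\triangleright f(a_2,\dots)+\sum_{i=1}^n(-1)^if(\dots,a_ia_{i+1},\dots)+(-1)^{n+1}f(a_1,\dots,a_n)\triangleleft a_{n+1}$; $(d_{N,N_M}F)(a_1,\dots,a_{n+1})=N(a_1)\triangleright F(a_2,\dots,a_{n+1})-(-1)^nF(a_1,\dots,a_n)\triangleleft N(a_{n+1})+\sum_{i=1}^n(-1)^iF(a_1,\dots,a_{i-1},N(a_i)a_{i+1}+a_iN(a_{i+1})-N(a_ia_{i+1}),\dots,a_{n+1})-N_M((\delta_{\mathrm{Hoch}}F)(a_1,\dots,a_{n+1}))$; $\partial^{N,N_M}(f)(a_1,\dots,a_n)=\sum_{S\subseteq\{1..n\}}(-1)^{|S|}N_M^{|S|}(f(b_1,\dots,b_n))$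 with $b_i=a_i$ for $i\in S$, $b_i=N(a_i)$ otherwise. *)

From HB Require Import structures.
From mathcomp Require Import all_boot all_order all_algebra.
Set Implicit Arguments. Unset Strict Implicit. Unset Printing Implicit Defensive.
Import GRing.Theory.
Local Open Scope ring_scope.

Section Defs.
Variable K : fieldType.

Section TwoTerm.
Variables (A0 A1 : lmodType K).
Variables (d : A1 -> A0) (m00 : A0 -> A0 -> A0) (m01 : A0 -> A1 -> A1)
          (m10 : A1 -> A0 -> A1) (m3 : A0 -> A0 -> A0 -> A1).

Definition two_term_Ainf : Prop :=
  ( (forall a u, d (m01 a u) = m00 a (d u)) /\
      (forall u a, d (m10 u a) = m00 (d u) a) /\
      (forall u v, m10 u (d v) = m01 (d u) v) /\
      (forall a b c, d (m3 a b c) = m00 (m00 a b) c - m00 a (m00 b c)) /\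
      (forall a b u, m3 a b (d u) = m01 (m00 a b) u - m01 a (m01 b u)) /\
      (forall a b u, m3 a (d u) b = m10 (m01 a u) b - m01 a (m10 u b)) /\
      (forall a b u, m3 (d u) a b = m10 (m10 u a) b - m10 u (m00 a b)) /\
      (forall a b c e, m01 a (m3 b c e) - m3 (m00 a b) c e + m3 a (m00 b c) e
                       - m3 a b (m00 c e) + m10 (m3 a b c) e = 0)).

Variables (N0 : A0 -> A0) (N1 : A1 -> A1) (N2 : A0 -> A0 -> A1).

Definition Ndot (a b : A0) := m00 (N0 a) b + m00 a (N0 b) - N0 (m00 a b).

Definition homotopy_nijenhuis : Prop :=
  [/\ (forall u, d (N1 u) = N0 (d u)),
      (forall a b, N0 (Ndot a b) - m00 (N0 a) (N0 b) = d (N2 a b)),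
      (forall a u, N1 (m01 (N0 a) u + m01 a (N1 u) - N1 (m01 a u))
                   - m01 (N0 a) (N1 u) = N2 a (d u)),
      (forall a u, N1 (m10 (N1 u) a + m10 u (N0 a) - N1 (m10 u a))
                   - m10 (N1 u) (N0 a) = N2 (d u) a) &
      (forall a b c,
         m01 (N0 a) (N2 b c) - m10 (N2 a b) (N0 c) - N2 (Ndot a b) c
         + N2 a (Ndot b c)
         - N1 (m01 a (N2 b c) - N2 (m00 a b) c + N2 a (m00 b c) - m10 (N2 a b) c)
       = m3 (N0 a) (N0 b) (N0 c) - N1 (m3 (N0 a) (N0 b) c)
         - N1 (m3 (N0 a) b (N0 c)) - N1 (m3 a (N0 b) (N0 c))
         + N1 (N1 (m3 (N0 a) b c)) + N1 (N1 (m3 a (N0 b) c))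
         + N1 (N1 (m3 a b (N0 c))) - N1 (N1 (N1 (m3 a b c))))].
End TwoTerm.

Section NAlg.
Variables (A M : lmodType K).
Variables (mul : A -> A -> A) (N : A -> A).
Variables (l : A -> M -> M) (r : M -> A -> M) (NM : M -> M).

Definition nijenhuis_algebra : Prop :=
  (forall a b c, mul (mul a b) c = mul a (mul b c)) /\
  (forall a b, mul (N a) (N b) = N (mul (N a) b + mul a (N b) - N (mul a b))).

Definition bimodule : Prop :=
  [/\ (forall a b u, l (mul a b) u = l a (l b u)),
      (forall a b u, r u (mul a b) = r (r u a) b) &
      (forall a b u, r (l a u) b = l a (r u b))].

Definition nijenhuis_bimodule : Prop :=
  [/\ bimodule,
      (forall a u, l (N a) (NM u) = NM (l (N a) u + l a (NM u) - NM (l a u))) &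
      (forall a u, r (NM u) (N a) = NM (r (NM u) a + r u (N a) - NM (r u a)))].

Definition ndot (a b : A) := mul (N a) b + mul a (N b) - N (mul a b).

Definition hoch2 (F : A -> A -> M) (a1 a2 a3 : A) : M :=
  l a1 (F a2 a3) + (-1) ^+ 1 *: F (mul a1 a2) a3 + (-1) ^+ 2 *: F a1 (mul a2 a3)
  + (-1) ^+ 3 *: r (F a1 a2) a3.

Definition hoch3 (chi : A -> A -> A -> M) (a1 a2 a3 a4 : A) : M :=
  l a1 (chi a2 a3 a4) + (-1) ^+ 1 *: chi (mul a1 a2) a3 a4
  + (-1) ^+ 2 *: chi a1 (mul a2 a3) a4 + (-1) ^+ 3 *: chi a1 a2 (mul a3 a4)
  + (-1) ^+ 4 *: r (chi a1 a2 a3) a4.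

Definition dNN2 (F : A -> A -> M) (a1 a2 a3 : A) : M :=
  l (N a1) (F a2 a3) - (-1) ^+ 2 *: r (F a1 a2) (N a3)
  + (-1) ^+ 1 *: F (ndot a1 a2) a3 + (-1) ^+ 2 *: F a1 (ndot a2 a3)
  - NM (hoch2 F a1 a2 a3).

Definition partialNN3 (chi : A -> A -> A -> M) (a1 a2 a3 : A) : M :=
  let v (i : 'I_3) := nth a1 [:: a1; a2; a3] i in
  let b (S : {set 'I_3}) (i : 'I_3) := if i \in S then v i else N (v i) in
  \sum_(S : {set 'I_3})
     (-1) ^+ #|S| *: iter #|S| NM (chi (b S ord0) (b S (inord 1)) (b S (inord 2))).

Definition cocycle3 (chi : A -> A -> A -> M) (F : A -> A -> M) : Prop :=
  (forall a1 a2 a3 a4, hoch3 chi a1 a2 a3 a4 = 0) /\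
  (forall a1 a2 a3, dNN2 F a1 a2 a3 - partialNN3 chi a1 a2 a3 = 0).
End NAlg.
End Defs.

(* For a skeletal algebra (d = 0) every axiom of a 2-term homotopy Nijenhuis
   algebra either holds trivially, because the structure maps vanish at 0, or
   reads 0 = x - y where x = y is one of the axioms of a Nijenhuis algebra or of
   a Nijenhuis bimodule; the two remaining axioms, for mu3 and for N2, are the
   two cocycle conditions once the signs of the coboundaries and the eight terms
   of the sum over subsets defining partial^{N,N_M} are expanded. *)

From HB Require Import structures.
From mathcomp Require Import all_boot all_order all_algebra.
Import GRing.Theory.
Local Open Scope ring_scope.

Lemma linear_map0 {K : fieldType} {U V : lmodType K} {f : U -> V} :
  linear f -> f 0 = 0.
Proof.
move=> f_lin; have := f_lin 1 0 0; rewrite !scale1r addr0 => f0D.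
by apply: (@addrI _ (f 0)); rewrite addr0 -f0D.
Qed.

Lemma zero_eq_subr (V : zmodType) (x y : V) : 0 = x - y <-> x = y.
Proof. by split=> [/esym/subr0_eq | ->]; last rewrite subrr. Qed.

Lemma scaler_signn (K : fieldType) (V : lmodType K) n (v : V) :
  (-1) ^+ n *: v = if odd n then - v else v.
Proof. by rewrite -signr_odd scaler_sign. Qed.

Definition set_of_bools3 (p : bool * bool * bool) : {set 'I_3} :=
  [set i : 'I_3 | nth false [:: p.1.1; p.1.2; p.2] i].

Lemma set_of_bools3_bij : bijective set_of_bools3.
Proof.
exists (fun S : {set 'I_3} => (ord0 \in S, inord 1 \in S, inord 2 \in S)).
  by move=> [[x y] z]; rewrite /set_of_bools3 !inE /= !inordK.
move=> S; apply/setP=> i; rewrite inE /=.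
by case: i => [[|[|[|n]]] lt_i3] //=; congr (_ \in S); apply: val_inj;
  rewrite /= ?inordK.
Qed.

Lemma card_set_of_bools3 x y z : #|set_of_bools3 (x, y, z)| = (x + y + z)%N.
Proof.
rewrite cardsE -sum1_card big_mkcond /= !big_ord_recl big_ord0 /=.
by case: x; case: y; case: z.
Qed.

Lemma sum_bool3 (V : nmodType) (F : bool * bool * bool -> V) :
  \sum_p F p = \sum_x \sum_y \sum_z F (x, y, z).
Proof.
rewrite (eq_bigr (fun p => F (p.1, p.2))); last by case.
rewrite -(pair_bigA _ (fun p z => F (p, z))) /=.
rewrite (eq_bigr (fun p : bool * bool => \sum_z F (p.1, p.2, z))); last by case.
by rewrite -(pair_bigA _ (fun x y => \sum_z F (x, y, z))).
Qed.

Section Coboundaries.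
Variables (K : fieldType) (A M : lmodType K).
Variables (mul : A -> A -> A) (N : A -> A).
Variables (l : A -> M -> M) (r : M -> A -> M) (NM : M -> M).

Lemma hoch3E chi a1 a2 a3 a4 :
  hoch3 mul l r chi a1 a2 a3 a4 =
  l a1 (chi a2 a3 a4) - chi (mul a1 a2) a3 a4 + chi a1 (mul a2 a3) a4
  - chi a1 a2 (mul a3 a4) + r (chi a1 a2 a3) a4.
Proof. by rewrite /hoch3 !scaler_signn. Qed.

Lemma dNN2E F a b c :
  dNN2 mul N l r NM F a b c =
  l (N a) (F b c) - r (F a b) (N c) - F (ndot mul N a b) c
  + F a (ndot mul N b c)
  - NM (l a (F b c) - F (mul a b) c + F a (mul b c) - r (F a b) c).
Proof. by rewrite /dNN2 /hoch2 !scaler_signn. Qed.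

Lemma partialNN3E chi a b c :
  partialNN3 N NM chi a b c =
  chi (N a) (N b) (N c) - NM (chi (N a) (N b) c)
  - NM (chi (N a) b (N c)) - NM (chi a (N b) (N c))
  + NM (NM (chi (N a) b c)) + NM (NM (chi a (N b) c))
  + NM (NM (chi a b (N c))) - NM (NM (NM (chi a b c))).
Proof.
rewrite /partialNN3 (reindex set_of_bools3); last first.
  by apply: onW_bij; exact: set_of_bools3_bij.
rewrite sum_bool3 !big_bool /= !card_set_of_bools3 /set_of_bools3 !inE /=.
rewrite !inordK //= !scaler_signn /=.
by rewrite !addrA [LHS](ACl (8*7*6*4*5*3*2*1)).
Qed.

End Coboundaries.

Section Skeletal.
Variables (K : fieldType) (A0 A1 : lmodType K).
Variables (m00 : A0 -> A0 -> A0) (m01 : A0 -> A1 -> A1) (m10 : A1 -> A0 -> A1).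
Variables (m3 : A0 -> A0 -> A0 -> A1).
Variables (N0 : A0 -> A0) (N1 : A1 -> A1) (N2 : A0 -> A0 -> A1).

Section Ainf.
Hypotheses (m00_0r : forall a, m00 a 0 = 0) (m00_0l : forall a, m00 0 a = 0).
Hypotheses (m01_0l : forall u, m01 0 u = 0) (m10_0r : forall u, m10 u 0 = 0).
Hypotheses (m3_03 : forall a b, m3 a b 0 = 0) (m3_02 : forall a b, m3 a 0 b = 0).
Hypothesis (m3_01 : forall a b, m3 0 a b = 0).

Lemma skeletal_two_term_Ainf :
  two_term_Ainf (fun _ : A1 => 0 : A0) m00 m01 m10 m3 <->
  [/\ forall a b c, m00 (m00 a b) c = m00 a (m00 b c),
      bimodule m00 m01 m10 &
      forall a b c e, hoch3 m00 m01 m10 m3 a b c e = 0].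
Proof.
rewrite /two_term_Ainf /bimodule; split.
- case=> _ [_ [_ [assoc [left_act [mid_act [right_act m3_cocycle]]]]]].
  split; [by move=> a b c; apply/zero_eq_subr | split=> a b u |].
  + by apply/zero_eq_subr; rewrite -left_act m3_03.
  + by apply/esym/zero_eq_subr; rewrite -right_act m3_01.
  + by apply/zero_eq_subr; rewrite -mid_act m3_02.
  + by move=> a b c e; rewrite hoch3E m3_cocycle.
- case=> assoc [left_act right_act mid_act] m3_cocycle; do !split.
  + by move=> a u; rewrite m00_0r.
  + by move=> u a; rewrite m00_0l.
  + by move=> u v; rewrite m10_0r m01_0l.
  + by move=> a b c; apply/zero_eq_subr.
  + by move=> a b u; rewrite m3_03; apply/zero_eq_subr.
  + by move=> a b u; rewrite m3_02; apply/zero_eq_subr.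
  + by move=> a b u; rewrite m3_01 right_act; apply/zero_eq_subr.
  + by move=> a b c e; have := m3_cocycle a b c e; rewrite hoch3E.
Qed.

End Ainf.

Section Nijenhuis.
Hypothesis (N0_0 : N0 0 = 0).
Hypotheses (N2_0r : forall a, N2 a 0 = 0) (N2_0l : forall a, N2 0 a = 0).

Lemma skeletal_homotopy_nijenhuis :
  homotopy_nijenhuis (fun _ : A1 => 0 : A0) m00 m01 m10 m3 N0 N1 N2 <->
  [/\ forall a b, m00 (N0 a) (N0 b) = N0 (Ndot m00 N0 a b),
      forall a u, m01 (N0 a) (N1 u) =
                  N1 (m01 (N0 a) u + m01 a (N1 u) - N1 (m01 a u)),
      forall a u, m10 (N1 u) (N0 a) =
                  N1 (m10 (N1 u) a + m10 u (N0 a) - N1 (m10 u a)) &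
      forall a b c,
        dNN2 m00 N0 m01 m10 N1 N2 a b c - partialNN3 N0 N1 m3 a b c = 0].
Proof.
rewrite /homotopy_nijenhuis; split.
- case=> _ nij left_nij right_nij N2_cocycle; split.
  + by move=> a b; apply/esym/zero_eq_subr; rewrite nij.
  + by move=> a u; apply/esym/zero_eq_subr; rewrite left_nij N2_0r.
  + by move=> a u; apply/esym/zero_eq_subr; rewrite right_nij N2_0l.
  + by move=> a b c; rewrite dNN2E partialNN3E N2_cocycle subrr.
- case=> nij left_nij right_nij N2_cocycle; split.
  + by move=> u; rewrite N0_0.
  + by move=> a b; apply/esym/zero_eq_subr.
  + by move=> a u; rewrite N2_0r; apply/esym/zero_eq_subr.
  + by move=> a u; rewrite N2_0l; apply/esym/zero_eq_subr.
  + move=> a b c; apply/subr0_eq.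
    by rewrite -(N2_cocycle a b c) dNN2E partialNN3E.
Qed.

End Nijenhuis.

End Skeletal.

Theorem theorem6p4 (K : fieldType) (hK : [pchar K] =i pred0)
  (A0 A1 : lmodType K)
  (m00 : A0 -> A0 -> A0) (m01 : A0 -> A1 -> A1) (m10 : A1 -> A0 -> A1)
  (m3 : A0 -> A0 -> A0 -> A1)
  (N0 : A0 -> A0) (N1 : A1 -> A1) (N2 : A0 -> A0 -> A1)
  (* linearity of all structure maps in each argument *)
  (Hm00l : forall b, linear (m00^~ b)) (Hm00r : forall a, linear (m00 a))
  (Hm01l : forall u, linear (m01^~ u)) (Hm01r : forall a, linear (m01 a))
  (Hm10l : forall a, linear (m10^~ a)) (Hm10r : forall u, linear (m10 u))
  (Hm3_1 : forall b c, linear (fun a => m3 a b c))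
  (Hm3_2 : forall a c, linear (fun b => m3 a b c))
  (Hm3_3 : forall a b, linear (m3 a b))
  (HN0 : linear N0) (HN1 : linear N1)
  (HN2l : forall b, linear (N2^~ b)) (HN2r : forall a, linear (N2 a)) :
  (* skeletal (d = 0) 2-term homotopy Nijenhuis algebra *)
  (two_term_Ainf (fun _ : A1 => 0 : A0) m00 m01 m10 m3 /\
   homotopy_nijenhuis (fun _ : A1 => 0 : A0) m00 m01 m10 m3 N0 N1 N2)
  <->
  (* Nijenhuis algebra, Nijenhuis bimodule and 3-cocycle (mu3, N2) *)
  (nijenhuis_algebra m00 N0 /\
   nijenhuis_bimodule m00 N0 m01 m10 N1 /\
   cocycle3 m00 N0 m01 m10 N1 m3 N2).
Proof.
have Ainf := @skeletal_two_term_Ainf K A0 A1 m00 m01 m10 m3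
  (fun a => linear_map0 (Hm00r a)) (fun a => linear_map0 (Hm00l a))
  (fun u => linear_map0 (Hm01l u)) (fun u => linear_map0 (Hm10r u))
  (fun a b => linear_map0 (Hm3_3 a b)) (fun a b => linear_map0 (Hm3_2 a b))
  (fun a b => linear_map0 (Hm3_1 a b)).
have Nij := @skeletal_homotopy_nijenhuis K A0 A1 m00 m01 m10 m3 N0 N1 N2
  (linear_map0 HN0)
  (fun a => linear_map0 (HN2r a)) (fun a => linear_map0 (HN2l a)).
split=> [[/Ainf[assoc bimod m3_cocycle] /Nij[nij left_nij right_nij N2_cocycle]]
        | [[assoc nij] [[bimod left_nij right_nij] [m3_cocycle N2_cocycle]]]].
- by split; [split | split; split].
- by split; [apply/Ainf | apply/Nij].
Qed.
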